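(* Every finite-dimensional admissible Poisson algebra $(\mathcal{P},\cdot)$ which is not a nilalgebra contains a principal idempotent, i.e. a non-zero idempotent $e$ such that there is no non-zero idempotent $u$ with $u\cdot e=e\cdot u=0$.
   Context: $\mathbb{K}$ is a field of characteristic different from $2$ and $3$. Associator: $A(X,Y,Z)=(X\cdot Y)\cdot Z-X\cdot(Y\cdot Z)$. An admissible Poisson algebra is a $\mathbb{K}$-vector space $\mathcal{P}$ with a bilinear product $\cdot$ satisfying $3A(X,Y,Z)=(X\cdot Z)\cdot Y+(Y\cdot Z)\cdot X-(Y\cdot X)\cdot Z-(Z\cdot X)\cdot Y$ for all $X,Y,Z$. Idempotent: $e\cdot e=e$. Powers: $X^1=X$, $X^{i+1}=X\cdot X^i$; $\mathcal{P}$ is a nilalgebra if every $X$ satisfies $X^r=0$ for some $r$. *)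

From HB Require Import structures.
From mathcomp Require Import all_boot all_order all_algebra.
Set Implicit Arguments. Unset Strict Implicit. Unset Printing Implicit Defensive.
Import Order.TTheory GRing.Theory Num.Theory.
Local Open Scope ring_scope.

Section AdmissiblePoisson.
Variables (K : fieldType) (V : vectType K) (mul : V -> V -> V).

Definition bilinear_prod : Prop :=
  (forall (a : K) (x y z : V), mul (a *: x + y) z = a *: mul x z + mul y z) /\
  (forall (a : K) (x y z : V), mul z (a *: x + y) = a *: mul z x + mul z y).

Definition associator (x y z : V) : V := mul (mul x y) z - mul x (mul y z).

Definition admissible_poisson : Prop :=
  forall x y z : V,
    associator x y z *+ 3 =
      mul (mul x z) y + mul (mul y z) x - mul (mul y x) z - mul (mul z x) y.

(* ppow x n = X^(n+1), with X^1 = X and X^(i+1) = X . X^i *)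
Definition ppow (x : V) (n : nat) : V := iter n (mul x) x.

Definition nilalgebra : Prop := forall x : V, exists n : nat, ppow x n = 0.

Definition idempotent (e : V) : Prop := mul e e = e.

Definition principal_idempotent (e : V) : Prop :=
  e != 0 /\ idempotent e /\
  ~ (exists u : V, u != 0 /\ idempotent u /\ mul u e = 0 /\ mul e u = 0).

End AdmissiblePoisson.

From Pilot Require Import Defs.
From HB Require Import structures.
From mathcomp Require Import all_boot all_order all_algebra.
From mathcomp Require Import ring zify.
From Stdlib Require Import Classical.
Set Implicit Arguments. Unset Strict Implicit. Unset Printing Implicit Defensive.
Import GRing.Theory.
Local Open Scope ring_scope.

(* The symmetrized product x o y = (xy + yx)/2 is commutative and associative,
   and [x, _] = xy - yx is a derivation of it: both are Z-linear consequences of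
   the admissible identity at the six permutations of (x, y, z), up to a factor 3.
   Hence x commutes with its powers, which are therefore its o-powers, and a
   non-nilpotent x yields a non-zero idempotent by Fitting's argument: the images
   W_n of multiplication by x^n decrease and stabilise at some W, multiplication
   by y = x^(2N+1) is bijective on W, and the preimage of y in W is idempotent.
   If u is a non-zero idempotent orthogonal to an idempotent e, then e + u is an
   idempotent whose multiplication image strictly contains that of e, so an
   idempotent with an image of maximal dimension is principal. *)

Section IntegerCombinations.
Variables (M : zmodType) (n : nat) (a : nat -> M).

Definition zcomb (p : {poly int}) : M := \sum_(i < n) a i *~ p`_i.

Lemma zcombD p q : zcomb (p + q) = zcomb p + zcomb q.
Proof. by rewrite -big_split; apply: eq_bigr => i _; rewrite coefD mulrzDr. Qed.

Lemma zcombN p : zcomb (- p) = - zcomb p.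
Proof. by rewrite -sumrN; apply: eq_bigr => i _; rewrite coefN mulrNz. Qed.

Lemma zcombMn p m : zcomb (p *+ m) = zcomb p *+ m.
Proof.
by rewrite -sumrMnl; apply: eq_bigr => i _; rewrite coefMn -mulr_natr mulrzA mulrz_nat.
Qed.

Lemma zcombX j : (j < n)%N -> zcomb 'X^j = a j.
Proof.
move=> ltjn; rewrite /zcomb (bigD1 (Ordinal ltjn)) //= coefXn eqxx big1 ?addr0 //.
by move=> i neq; rewrite coefXn -[(i : nat) == j]/(i == Ordinal ltjn) (negPf neq).
Qed.

End IntegerCombinations.

(* The a i stand for the twelve products listed in symprodA_bracket_derivation.
   The linear identities are checked in the free Z-module {poly int} on the 'X^i,
   where [ring] decides them, and transported to M along [zcomb]. *)
Lemma admissible_linear_consequences (M : zmodType) (a : nat -> M) :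
  (a 0%N - a 6%N) *+ 3 = a 1%N + a 3%N - a 2%N - a 4%N ->
  (a 1%N - a 7%N) *+ 3 = a 0%N + a 5%N - a 4%N - a 2%N ->
  (a 2%N - a 8%N) *+ 3 = a 3%N + a 1%N - a 0%N - a 5%N ->
  (a 3%N - a 9%N) *+ 3 = a 2%N + a 4%N - a 5%N - a 0%N ->
  (a 4%N - a 10%N) *+ 3 = a 5%N + a 0%N - a 1%N - a 3%N ->
  (a 5%N - a 11%N) *+ 3 = a 4%N + a 2%N - a 3%N - a 1%N ->
  (a 0%N + a 2%N + a 10%N + a 11%N - (a 6%N + a 7%N + a 3%N + a 5%N)) *+ 3 = 0 /\
  (a 6%N + a 7%N - a 3%N - a 5%N
     - (a 0%N - a 2%N + a 10%N - a 11%N + (a 8%N - a 9%N + a 1%N - a 4%N))) *+ 3 = 0.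
Proof.
move=> h0 h1 h2 h3 h4 h5.
pose X (j : nat) : {poly int} := 'X^j.
pose rel i j (p : {poly int}) := (X i - X j) *+ 3 - p.
pose R0 := rel 0%N 6%N (X 1%N + X 3%N - X 2%N - X 4%N).
pose R1 := rel 1%N 7%N (X 0%N + X 5%N - X 4%N - X 2%N).
pose R2 := rel 2%N 8%N (X 3%N + X 1%N - X 0%N - X 5%N).
pose R3 := rel 3%N 9%N (X 2%N + X 4%N - X 5%N - X 0%N).
pose R4 := rel 4%N 10%N (X 5%N + X 0%N - X 1%N - X 3%N).
pose R5 := rel 5%N 11%N (X 4%N + X 2%N - X 3%N - X 1%N).
have zcomb12X j : (j < 12)%N -> zcomb 12 a (X j) = a j by exact: zcombX.
have e0 : zcomb 12 a R0 = 0 by rewrite /R0 /rel !(zcombD, zcombN, zcombMn) !zcomb12X // h0 subrr.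
have e1 : zcomb 12 a R1 = 0 by rewrite /R1 /rel !(zcombD, zcombN, zcombMn) !zcomb12X // h1 subrr.
have e2 : zcomb 12 a R2 = 0 by rewrite /R2 /rel !(zcombD, zcombN, zcombMn) !zcomb12X // h2 subrr.
have e3 : zcomb 12 a R3 = 0 by rewrite /R3 /rel !(zcombD, zcombN, zcombMn) !zcomb12X // h3 subrr.
have e4 : zcomb 12 a R4 = 0 by rewrite /R4 /rel !(zcombD, zcombN, zcombMn) !zcomb12X // h4 subrr.
have e5 : zcomb 12 a R5 = 0 by rewrite /R5 /rel !(zcombD, zcombN, zcombMn) !zcomb12X // h5 subrr.
have E1 : (X 0%N + X 2%N + X 10%N + X 11%N - (X 6%N + X 7%N + X 3%N + X 5%N)) *+ 3
    = R0 + R1 - R4 - R5 by rewrite /R0 /R1 /R4 /R5 /rel; ring.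
have E2 : (X 6%N + X 7%N - X 3%N - X 5%N
    - (X 0%N - X 2%N + X 10%N - X 11%N + (X 8%N - X 9%N + X 1%N - X 4%N))) *+ 3
    = - R0 - R1 + R2 - R3 + R4 - R5 by rewrite /R0 /R1 /R2 /R3 /R4 /R5 /rel; ring.
clearbody R0 R1 R2 R3 R4 R5.
split.
- move: (congr1 (zcomb 12 a) E1).
  by rewrite !(zcombD, zcombN, zcombMn) e0 e1 e4 e5 !zcomb12X // ?subr0 ?addr0.
- move: (congr1 (zcomb 12 a) E2).
  by rewrite !(zcombD, zcombN, zcombMn) e0 e1 e2 e3 e4 e5 !zcomb12X // ?oppr0 ?subr0 ?addr0.
Qed.

Lemma dimv_ltn (K : fieldType) (V : vectType K) (U W : {vspace V}) :
  (U <= W)%VS -> ~~ (W <= U)%VS -> (\dim U < \dim W)%N.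
Proof. by move=> sUW; rewrite (ltn_leqif (dimv_leqif_sup sUW)). Qed.

Lemma vspace_chain_stationary (K : fieldType) (V : vectType K) (U : nat -> {vspace V}) :
  (forall n, (U n.+1 <= U n)%VS) -> exists N, forall m, (N <= m)%N -> U m = U N.
Proof.
move=> decrU.
have subU : {homo U : m n / (m <= n)%N >-> (n <= m)%VS}.
  by apply: homo_leq => // W1 W2 W3 s21 s32; apply: subv_trans s32 s21.
have stable_or_drop n :
    (forall m, (n <= m)%N -> U m = U n) \/ exists m, (\dim (U m) < \dim (U n))%N.
  have [[m [lenm neqU]]|stable] := classic (exists m, (n <= m)%N /\ U m != U n).
    right; exists m; apply: dimv_ltn (subU _ _ lenm) _.
    by apply: contra neqU => sUnm; rewrite eqEsubv sUnm subU.
  by left=> m lenm; apply/eqP; apply: contra_notT stable => neqU; exists m.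
suff dim_induction k n :
    (\dim (U n) <= k)%N -> exists N, forall m, (N <= m)%N -> U m = U N.
  exact: dim_induction _ 0%N (leqnn _).
elim: k n => [|k IHk] n dimUn; case: (stable_or_drop n) => [|[m ltUmn]]; try by exists n.
- by move: (leq_trans ltUmn dimUn).
- by apply: (IHk m); rewrite -ltnS (leq_trans ltUmn).
Qed.

Section CommutativeAssociative.
Variables (K : fieldType) (V : vectType K) (op : V -> V -> V).
Hypotheses (op_linear : forall y, linear (op y))
  (opC : forall x y, op x y = op y x) (opA : forall x y z, op (op x y) z = op x (op y z)).

(* A constant head symbol, so that [op y] can carry a canonical linear structure. *)
Definition op_left y x := op y x.

HB.instance Definition _ y := GRing.isLinear.Build K V V *:%R (op_left y) (op_linear y).

Lemma op0r y : op y 0 = 0.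
Proof. exact: (linear0 (op_left y)). Qed.

Lemma opDr y u v : op y (u + v) = op y u + op y v.
Proof. exact: (linearD (op_left y)). Qed.

Lemma opBr y u v : op y (u - v) = op y u - op y v.
Proof. exact: (linearB (op_left y)). Qed.

Definition opL y : 'End(V) := linfun (op_left y).

Lemma opLE y v : opL y v = op y v.
Proof. exact: lfunE. Qed.

Lemma opL_comp x y : (opL x \o opL y)%VF = opL (op x y).
Proof. by apply/lfunP => v; rewrite comp_lfunE !opLE opA. Qed.

Lemma mem_opL_img y v : reflect (exists w, v = op y w) (v \in limg (opL y)).
Proof.
apply: (iffP memv_imgP) => [[w _ ->]|[w ->]]; first by exists w; rewrite opLE.
by exists w; rewrite ?memvf ?opLE.
Qed.

Lemma opL_img_comp x y : limg (opL (op x y)) = (opL x @: limg (opL y))%VS.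
Proof. by rewrite -opL_comp limg_comp. Qed.

Definition opow x n := iter n (op x) x.

Lemma opowS x n : opow x n.+1 = op x (opow x n).
Proof. by []. Qed.

Lemma opowD x m n : op (opow x m) (opow x n) = opow x (m + n).+1.
Proof. by elim: m => [//|m IHm]; rewrite /= opA IHm. Qed.

Definition opow_img x n := limg (opL (opow x n)).

Lemma opow_imgS x n : (opow_img x n.+1 <= opow_img x n)%VS.
Proof. by rewrite /opow_img [opow x n.+1]opC opL_img_comp limgS ?subvf. Qed.

Lemma idempotent_of_non_nilpotent x :
  (forall n, opow x n != 0) -> exists e, e != 0 /\ op e e = e.
Proof.
move=> nz_x; have [N stable] := vspace_chain_stationary (opow_imgS x).
set W := opow_img x N; set p := opow x N; set y := op p p.
have yE : y = opow x (N + N).+1 by rewrite /y opowD.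
have yW : y \in W by apply/mem_opL_img; exists p.
have opLyW : (opL y @: W)%VS = W.
  rewrite -opL_img_comp yE opowD; apply: stable.
  exact: leq_trans (leq_addl _ _) (leqnSn _).
have W_ker : (W :&: lker (opL y))%VS = 0%VS.
  apply/eqP; rewrite -dimv_eq0; have := limg_ker_dim (opL y) W.
  by rewrite opLyW => /eqP; rewrite -{2}[\dim W]add0n eqn_add2r.
have [e eW ye] : exists2 e, e \in W & y = op y e.
  by move: yW; rewrite -{1}opLyW => /memv_imgP [e eW]; rewrite opLE; exists e.
have eeW : op e e \in W.
  by move/mem_opL_img: eW => [w ->]; apply/mem_opL_img; exists (op w (op p w)); rewrite !opA.
exists e; split.
  by apply: contra_neq (nz_x (N + N).+1) => e0; rewrite -yE ye e0 op0r.
have yee : op y (op e e) = y by rewrite -opA -ye -ye.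
apply/eqP; rewrite -subr_eq0 -memv0 -W_ker memv_cap memvB //= memv_ker opLE opBr.
by rewrite yee -ye subrr.
Qed.

Lemma orthogonal_idempotent_add e u :
  op e e = e -> u != 0 -> op u u = u -> op u e = 0 ->
  [/\ op (e + u) (e + u) = e + u, e + u != 0
    & (\dim (limg (opL e)) < \dim (limg (opL (e + u))))%N].
Proof.
move=> ee nz_u uu ue; have eu : op e u = 0 by rewrite opC.
have fe : op (e + u) e = e by rewrite opC opDr ee eu addr0.
have fu : op (e + u) u = u by rewrite opC opDr ue uu add0r.
split; first by rewrite opDr fe fu.
  by apply: contra_neq nz_u => f0; rewrite -fu f0 opC op0r.
apply: dimv_ltn.
  apply/subvP => v /mem_opL_img [w ->]; apply/mem_opL_img.
  by exists (op e w); rewrite -opA fe.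
have u_img : u \in limg (opL (e + u)) by apply/mem_opL_img; exists u; rewrite fu.
apply: contraNN nz_u => /subvP /(_ u u_img) /mem_opL_img [w uE].
by apply/eqP; rewrite -eu {2}uE -opA ee -uE.
Qed.

Lemma idempotent_maximal_or_grow e : op e e = e ->
  (forall u, op u u = u -> op u e = 0 -> u = 0) \/
  exists f, [/\ op f f = f, f != 0 & (\dim (limg (opL e)) < \dim (limg (opL f)))%N].
Proof.
move=> ee; have [[u [nz_u uu ue]]|maximal] :=
  classic (exists u, [/\ u != 0, op u u = u & op u e = 0]).
  by right; exists (e + u); apply: orthogonal_idempotent_add.
by left=> u uu ue; apply/eqP; apply: contra_notT maximal => nz_u; exists u.
Qed.

Lemma exists_maximal_idempotent e : e != 0 -> op e e = e ->
  exists f, [/\ f != 0, op f f = f & forall u, op u u = u -> op u f = 0 -> u = 0].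
Proof.
have [k] := ubnPleq (\dim {:V} - \dim (limg (opL e))).
elim: k e => [|k IHk] e bound_e nz_e ee;
  have [maximal|[f [ff nz_f lt_dim]]] := idempotent_maximal_or_grow ee; try by exists e.
all: have le_dim := dimvS (subvf (limg (opL f))).
- by lia.
- by apply: (IHk f) => //; lia.
Qed.

End CommutativeAssociative.

Section AdmissiblePoisson.
Variables (K : fieldType) (V : vectType K) (mul : V -> V -> V).
Hypotheses (char2 : (2%:R : K) != 0) (char3 : (3%:R : K) != 0)
  (mul_bilinear : bilinear_prod mul) (mul_admissible : admissible_poisson mul).

Definition mul_left z x := mul z x.
Definition mul_right z x := mul x z.

HB.instance Definition _ z := GRing.isLinear.Build K V V *:%R (mul_left z)
  (fun a u v => proj2 mul_bilinear a u v z).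
HB.instance Definition _ z := GRing.isLinear.Build K V V *:%R (mul_right z)
  (fun a u v => proj1 mul_bilinear a u v z).

Lemma mul0l z : mul 0 z = 0.
Proof. exact: (linear0 (mul_right z)). Qed.

Lemma mul0r z : mul z 0 = 0.
Proof. exact: (linear0 (mul_left z)). Qed.

Lemma mulDl x y z : mul (x + y) z = mul x z + mul y z.
Proof. exact: (linearD (mul_right z)). Qed.

Lemma mulDr x y z : mul z (x + y) = mul z x + mul z y.
Proof. exact: (linearD (mul_left z)). Qed.

Lemma mulNl x z : mul (- x) z = - mul x z.
Proof. exact: (linearN (mul_right z)). Qed.

Lemma mulNr x z : mul z (- x) = - mul z x.
Proof. exact: (linearN (mul_left z)). Qed.

Lemma mulZl a x z : mul (a *: x) z = a *: mul x z.
Proof. exact: (linearZ_LR (mul_right z)). Qed.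

Lemma mulZr a x z : mul z (a *: x) = a *: mul z x.
Proof. exact: (linearZ_LR (mul_left z)). Qed.

Lemma mulrn3_eq0 (w : V) : (w *+ 3 == 0) = (w == 0).
Proof. by rewrite -scaler_nat scaler_eq0 (negPf char3). Qed.

Lemma scale_half_double (w : V) : 2%:R^-1 *: (w + w) = w.
Proof. by rewrite -mulr2n -scaler_nat scalerA mulVf // scale1r. Qed.

Definition symprod x y := 2%:R^-1 *: (mul x y + mul y x).

Definition bracket x y := mul x y - mul y x.

Lemma symprodC x y : symprod x y = symprod y x.
Proof. by rewrite /symprod addrC. Qed.

Lemma symprodxx x : symprod x x = mul x x.
Proof. exact: scale_half_double. Qed.

Lemma symprod_linear y : linear (symprod y).
Proof.
move=> a u v; rewrite /symprod mulDr mulDl mulZr mulZl scalerA mulrC -scalerA -scalerDr.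
by congr (_ *: _); rewrite scalerDr addrACA.
Qed.

Lemma symprodA_bracket_derivation x y z :
  symprod (symprod x y) z = symprod x (symprod y z) /\
  bracket x (symprod y z) = symprod (bracket x y) z + symprod y (bracket x z).
Proof.
have [assoc3 derivation3] := @admissible_linear_consequences V (nth 0
  [:: mul (mul x y) z; mul (mul x z) y; mul (mul y x) z; mul (mul y z) x;
      mul (mul z x) y; mul (mul z y) x; mul x (mul y z); mul x (mul z y);
      mul y (mul x z); mul y (mul z x); mul z (mul x y); mul z (mul y x)])
  (mul_admissible x y z) (mul_admissible x z y) (mul_admissible y x z)
  (mul_admissible y z x) (mul_admissible z x y) (mul_admissible z y x).
move/eqP: assoc3; rewrite mulrn3_eq0 subr_eq0 => /eqP /= assoc.
move/eqP: derivation3; rewrite mulrn3_eq0 subr_eq0 => /eqP /= derivation.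
rewrite /symprod /bracket !(mulZl, mulZr, mulDl, mulDr, mulNl, mulNr) -!scalerDr -!scalerBr.
split; [congr (_ *: (_ *: _)) | congr (_ *: _)].
  by rewrite !addrA assoc.
by rewrite opprD !addrA derivation !addrA.
Qed.

Lemma symprodA x y z : symprod (symprod x y) z = symprod x (symprod y z).
Proof. exact: (proj1 (symprodA_bracket_derivation x y z)). Qed.

Lemma bracket_symprodr x y z :
  bracket x (symprod y z) = symprod (bracket x y) z + symprod y (bracket x z).
Proof. exact: (proj2 (symprodA_bracket_derivation x y z)). Qed.

Lemma symprod0r x : symprod x 0 = 0.
Proof. by rewrite /symprod mul0l mul0r addr0 scaler0. Qed.

Lemma symprod_bracket0 x y : bracket x y = 0 -> symprod x y = mul x y.
Proof. by move=> /subr0_eq xy_yx; rewrite /symprod -xy_yx scale_half_double. Qed.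

Lemma bracket_ppow x n : bracket x (ppow mul x n) = 0.
Proof.
elim: n => [|n IHn]; first exact: subrr.
have -> : ppow mul x n.+1 = symprod x (ppow mul x n) by rewrite symprod_bracket0.
by rewrite bracket_symprodr IHn symprod0r [bracket x x]subrr symprodC symprod0r addr0.
Qed.

Lemma ppow_opow x n : ppow mul x n = opow symprod x n.
Proof. by elim: n => [//|n IHn]; rewrite opowS -IHn symprod_bracket0 ?bracket_ppow. Qed.

End AdmissiblePoisson.

Theorem mainTheorem9 (K : fieldType) (V : vectType K) (mul : V -> V -> V) :
  (2%:R : K) != 0 -> (3%:R : K) != 0 ->
  bilinear_prod mul -> admissible_poisson mul ->
  ~ nilalgebra mul ->
  exists e : V, principal_idempotent mul e.
Proof.
move=> char2 char3 mul_bilinear mul_admissible not_nil.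
have symprod_lin := symprod_linear mul_bilinear.
have symprod_comm := symprodC mul.
have symprod_assoc := symprodA char3 mul_bilinear mul_admissible.
have [x nz_powers] : exists x, forall n, opow (symprod mul) x n != 0.
  have [x /not_ex_all_not nil_x] := not_all_ex_not _ _ not_nil.
  by exists x => n; rewrite -ppow_opow //; apply/eqP/nil_x.
have [e0 [nz_e0 e0e0]] :=
  idempotent_of_non_nilpotent symprod_lin symprod_comm symprod_assoc nz_powers.
have [e [nz_e ee maximal]] :=
  exists_maximal_idempotent symprod_lin symprod_comm symprod_assoc nz_e0 e0e0.
have mul_sq := symprodxx mul char2.
exists e; split=> //; split; first by rewrite /Defs.idempotent -mul_sq.
move=> [u [nz_u [uu [ue eu]]]].
have u0 : u = 0 by apply: maximal; [rewrite mul_sq | rewrite /symprod ue eu addr0 scaler0].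
by rewrite u0 eqxx in nz_u.
Qed.
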